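(* Let $\mathbf{x}$ be a set of $d'$ distinct real numbers, let $[L,R]$ be an interval of integers (with $L\le R$), and let $n\le d'$ be a nonnegative integer. Consider any probabilistic process $P$ that chooses a uniformly random subset $S\subseteq\mathbf{x}$ of size $n$ and then selects (arbitrarily, possibly depending on $S$) a real interval $I=[I_\ell,I_r]$ such that $|S\cap I|\in[L,R]$. Then \[ \mathop{\mathbb{P}}_{(S,I)\sim P}\left[|\mathbf{x}\cap I|\in\left(\frac12L\frac{d'}{n},\,2R\frac{d'}{n}\right)\right]\ge 1-3d'\exp\left(-\frac{L}{6}\right). \] *)

From HB Require Import structures.
From mathcomp Require Import all_boot all_order all_algebra.
From mathcomp Require Import reals.
From mathcomp Require Import sequences exp.
Set Implicit Arguments. Unset Strict Implicit. Unset Printing Implicit Defensive.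
Import Order.TTheory GRing.Theory Num.Theory.
Local Open Scope ring_scope.

Definition cnt_in (R : realType) (d : nat) (x : 'I_d -> R)
  (A : {set 'I_d}) (I : R * R) : nat :=
  #|[set i in A | (I.1 <= x i <= I.2)]|.

(* Probability, under the process (S uniform n-subset of indices, then the
   interval I S w chosen with probability q S w), of the event E S I. *)
Definition proc_prob (R : realType) (d n : nat) (Omega : finType)
  (q : {set 'I_d} -> Omega -> R) (I : {set 'I_d} -> Omega -> R * R)
  (E : {set 'I_d} -> R * R -> bool) : R :=
  \sum_(S : {set 'I_d} | #|S| == n)
     ('C(d, n)%:R)^-1 * \sum_(w : Omega) q S w * (if E S (I S w) then 1 else 0).

(* Call a sample S bad if some interval containing between L and R points of S
   contains at most L d'/(2n) or at least 2 R d'/n points of x.  Shrinking the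
   interval to the segment between its extreme points of x, we may take it to be
   [x_i, x_j].  For a fixed left end x_i these segments form a chain, so badness
   at i is witnessed by a single segment K: the largest one with at most
   L d'/(2n) points (hit at least L times), or the smallest one with at least
   2 R d'/n points (hit at most R times).  For fixed K, |S ∩ K| is hypergeometric;
   since P(J ⊆ S) <= (n/d')^|J|, its moment generating function is dominated by
   the binomial one, E (1 + w)^|S ∩ K| <= (1 + w n/d')^|K|, and Markov's
   inequality gives the Chernoff bounds e^(-L/6) and e^(-R/6).  A union bound
   over the d' left ends bounds the probability of a bad sample by
   2 d' e^(-L/6). *)

From HB Require Import structures.
From mathcomp Require Import all_boot all_order all_algebra.
From mathcomp Require Import reals.
From mathcomp Require Import sequences exp.
From mathcomp Require Import zify ring lra.
Import Order.TTheory GRing.Theory Num.Theory.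
Local Open Scope ring_scope.

Set Implicit Arguments. Unset Strict Implicit. Unset Printing Implicit Defensive.

Lemma leq_bin_subn_expn d n j : (j <= n <= d ->
  'C(d - j, n - j) * d ^ j <= 'C(d, n) * n ^ j)%N.
Proof.
elim: j => [|j IHj] /andP[lt_jn le_nd]; first by rewrite !subn0 !expn0 !muln1.
have /IHj IH : (j <= n <= d)%N by rewrite ltnW.
have le_ratio : ((n - j) * d <= (d - j) * n)%N by nia.
have Pascal := mul_bin_diag (d - j) (n - j.+1).
rewrite -subnS subnSK // in Pascal.
rewrite -(@leq_pmul2l (d - j)) ?subn_gt0 ?(leq_trans lt_jn) // !expnS mulnA Pascal.
by rewrite mulnACA [X in (_ <= X)%N]mulnA [X in (_ <= X)%N]mulnACA leq_mul.
Qed.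

Section Hypergeometric.
Variables (R : realType) (T : finType).
Hypothesis T_gt0 : (0 < #|T|)%N.

Lemma expr1D_sum_subsets (c : R) (K : {set T}) :
  (1 + c) ^+ #|K| = \sum_(J : {set T} | J \subset K) c ^+ #|J|.
Proof.
have -> : (1 + c) ^+ #|K| = \prod_(i : T) ((if i \in K then c else 0) + 1).
  rewrite -prodr_const [RHS](bigID (mem K)) /= [X in _ * X]big1 ?mulr1.
    by apply: eq_big => // i ->; rewrite addrC.
  by move=> i /negbTE ->; rewrite add0r.
rewrite bigA_distr [RHS]big_mkcond; apply: eq_bigr => J _ /=; rewrite -big_mkcond.
case: ifP => [/subsetP sJK | /negbT/subsetPn [i iJ iK]].
  by rewrite -prodr_const; apply: eq_bigr => i /sJK ->.
by rewrite (bigD1 i) //= (negbTE iK) mul0r.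
Qed.

Lemma card_draws_supset n (J : {set T}) : (n <= #|T|)%N ->
  (#|[set S : {set T} | (#|S| == n) && (J \subset S)]|%:R : R)
     <= 'C(#|T|, n)%:R * (n%:R / #|T|%:R) ^+ #|J|.
Proof.
move=> leq_nT; set D := [set S : {set T} | _].
have [ltnJ|leJn] := ltnP n #|J|.
  suff -> : D = set0 by rewrite cards0 mulr_ge0 // exprn_ge0 // divr_ge0.
  apply/setP => S; rewrite !inE; apply/negP => /andP[/eqP card_S].
  by move=> /subset_leq_card; rewrite card_S leqNgt ltnJ.
have card_D : (#|D| <= 'C(#|T| - #|J|, n - #|J|))%N.
  have card_CJ : #|~: J| = (#|T| - #|J|)%N by rewrite cardsCs setCK.
  rewrite -card_CJ -cards_draws -(card_in_imset (f := fun S => S :\: J)).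
    apply: subset_leq_card; apply/subsetP => _ /imsetP[S + ->]; rewrite !inE.
    move=> /andP[/eqP <- sJS].
    by rewrite subsetDr cardsD (setIidPr sJS) eqxx.
  move=> S1 S2; rewrite !inE => /andP[_ sJS1] /andP[_ sJS2] eqD.
  by rewrite -(setID S1 J) -(setID S2 J) (setIidPr sJS1) (setIidPr sJS2) eqD.
have bin_ratio : ('C(#|T| - #|J|, n - #|J|) * #|T| ^ #|J| <= 'C(#|T|, n) * n ^ #|J|)%N.
  by apply: leq_bin_subn_expn; rewrite leJn.
rewrite expr_div_n mulrA ler_pdivlMr ?exprn_gt0 ?ltr0n //.
by rewrite -!natrX -!natrM ler_nat (leq_trans _ bin_ratio) // leq_mul2r card_D orbT.
Qed.

Lemma sum_draws_exp_cardI n (K : {set T}) (w : R) : 0 <= w -> (n <= #|T|)%N ->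
  \sum_(S : {set T} | #|S| == n) (1 + w) ^+ #|S :&: K|
    <= 'C(#|T|, n)%:R * (1 + w * (n%:R / #|T|%:R)) ^+ #|K|.
Proof.
move=> w_ge0 leq_nT.
under eq_bigr => S _ do rewrite expr1D_sum_subsets.
rewrite (exchange_big_dep (fun J : {set T} => J \subset K)) /= => [|S J _]; last first.
  by rewrite subsetI => /andP[].
rewrite expr1D_sum_subsets mulr_sumr; apply: ler_sum => J sJK.
rewrite (eq_bigl (mem [set S : {set T} | (#|S| == n) && (J \subset S)])); last first.
  by move=> S; rewrite !inE subsetI sJK andbT.
rewrite sumr_const exprMn mulrCA -[w ^+ _ *+ _]mulr_natr.
by apply: ler_wpM2l; [exact: exprn_ge0 | exact: card_draws_supset].
Qed.

Lemma card_draws_cardI_geq n (K : {set T}) (w : R) (a : nat) :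
  0 <= w -> (n <= #|T|)%N ->
  #|[set S : {set T} | (#|S| == n) && (a <= #|S :&: K|)%N]|%:R * (1 + w) ^+ a
    <= 'C(#|T|, n)%:R * (1 + w * (n%:R / #|T|%:R)) ^+ #|K|.
Proof.
move=> w_ge0 leq_nT; apply: le_trans (sum_draws_exp_cardI K w_ge0 leq_nT).
rewrite mulr_natl -sumr_const big_mkcond [X in _ <= X]big_mkcond /=.
apply: ler_sum => S _; rewrite inE; case: (#|S| == n) => //=.
case: ifP => [le_a|_]; last by rewrite exprn_ge0 // addr_ge0.
by rewrite ler_weXn2l // lerDl.
Qed.

Lemma card_draws_cardI_leq n (K : {set T}) (w : R) (b : nat) :
  0 <= w -> (n <= #|T|)%N ->
  #|[set S : {set T} | (#|S| == n) && (#|S :&: K| <= b)%N]|%:R * (1 + w) ^+ (#|K| - b)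
    <= 'C(#|T|, n)%:R * (1 + w * (1 - n%:R / #|T|%:R)) ^+ #|K|.
Proof.
move=> w_ge0 leq_nT.
have -> : 1 - n%:R / #|T|%:R = (#|T| - n)%N%:R / #|T|%:R :> R.
  by rewrite natrB // mulrBl divff // pnatr_eq0 -lt0n.
rewrite -(bin_sub leq_nT).
(* the complement of S is a draw of size #|T| - n missing at least #|K| - b points of K *)
apply: le_trans (card_draws_cardI_geq K (#|K| - b) w_ge0 (leq_subr _ _)).
rewrite ler_wpM2r ?exprn_ge0 ?addr_ge0 // ler_nat -(card_imset _ (@setC_inj T)).
apply: subset_leq_card; apply/subsetP => _ /imsetP[S + ->]; rewrite !inE.
move=> /andP[/eqP <- le_b]; rewrite cardsCs setCK eqxx /=.
rewrite setIC -setDE -(cardsID S K) setIC.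
lia.
Qed.

End Hypergeometric.

Section ExpBounds.
Variable R : realType.

Lemma expr1D_le_expR (y : R) k : -1 <= y -> (1 + y) ^+ k <= expR (k%:R * y).
Proof.
move=> ge_y; rewrite expRM_natl lerXn2r ?nnegrE ?expR_ge0 ?expR_ge1Dx //.
by rewrite -lerBlDl sub0r.
Qed.

Lemma expR_2div3_le2 : expR (2 / 3 : R) <= 2.
Proof.
(* e^(1/24) <= 24/23 since 1 - t <= e^(-t); squaring four times gives (24/23)^16 < 2 *)
set e := expR (1 / 24 : R).
have e_ge0 : 0 <= e := expR_ge0 _.
have le_e : e ^+ 1 <= 24 / 23.
  have : (1 - 1 / 24) * e <= e^-1 * e by rewrite -expRN ler_wpM2r ?expR_ge1Dx.
  by rewrite mulVf ?lt0r_neq0 ?expR_gt0 // expr1; lra.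
have sqr k (c c' : R) : e ^+ k <= c -> c ^+ 2 <= c' -> e ^+ k.*2 <= c'.
  move=> le_c le_c'; rewrite -muln2 exprM (le_trans _ le_c') // lerXn2r // nnegrE.
    exact: exprn_ge0.
  exact: le_trans (exprn_ge0 _ e_ge0) le_c.
rewrite (_ : 2 / 3 = 16%:R * (1 / 24)); last by lra.
rewrite expRM_natl -/e.
apply: (sqr 8 (38 / 27)); last by rewrite expr2; lra.
apply: (sqr 4 (51 / 43)); last by rewrite expr2; lra.
apply: (sqr 2 (49 / 45)); last by rewrite expr2; lra.
by apply: (sqr 1 (24 / 23)); last by rewrite expr2; lra.
Qed.

End ExpBounds.

Section Chernoff.
Variables (R : realType) (T : finType).
Hypothesis T_gt0 : (0 < #|T|)%N.
Variable n : nat.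
Hypothesis leq_nT : (n <= #|T|)%N.
Let p : R := n%:R / #|T|%:R.

Lemma hypergeometric_lower_tail (K : {set T}) (a : nat) :
  p * #|K|%:R <= a%:R / 2 ->
  (#|[set S : {set T} | (#|S| == n) && (a <= #|S :&: K|)%N]|%:R : R)
    <= 'C(#|T|, n)%:R * expR (- (a%:R / 6)).
Proof.
move=> small_K.
(* weight 2 per point of S in K: since ln 2 >= 2/3, the bound is e^(a/2 - 2a/3) *)
have := card_draws_cardI_geq T_gt0 K a (@ler01 R) leq_nT; rewrite mul1r -/p => tail.
have two_pow : expR (a%:R * (2 / 3)) <= (1 + 1 : R) ^+ a.
  rewrite expRM_natl lerXn2r ?nnegrE ?expR_ge0 ?addr_ge0 //.
  by rewrite (le_trans (expR_2div3_le2 R)) //; lra.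
have mgf : (1 + p) ^+ #|K| <= expR (a%:R / 2).
  rewrite (le_trans (expr1D_le_expR _ _)) ?ler_expR 1?mulrC //.
  by rewrite (le_trans (lerN10 R)) ?divr_ge0.
rewrite -(ler_pM2r (expR_gt0 (a%:R * (2 / 3)))) -[X in _ <= X]mulrA -expRD.
rewrite (_ : _ + _ = a%:R / 2); last by field.
apply: le_trans (ler_wpM2l _ mgf); last exact: ler0n.
by apply: le_trans tail; rewrite ler_wpM2l.
Qed.

Lemma hypergeometric_upper_tail (K : {set T}) (b : nat) :
  2 * b%:R <= p * #|K|%:R ->
  (#|[set S : {set T} | (#|S| == n) && (#|S :&: K| <= b)%N]|%:R : R)
    <= 'C(#|T|, n)%:R * expR (- (b%:R / 6)).
Proof.
(* weight z = e^(1/2) per point of K missed by S;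
   as z >= 3/2, 1 + (z - 1)(1 - p) <= z (1 - p/3) *)
move=> large_K; set z := expR (1 / 2 : R).
have p_ge0 : 0 <= p by rewrite divr_ge0.
have p_le1 : p <= 1 by rewrite ler_pdivrMr ?ltr0n // mul1r ler_nat.
have z_gt0 : 0 < z := expR_gt0 _.
have z_ge : 3 / 2 <= z by have := expR_ge1Dx (1 / 2 : R); rewrite -/z; lra.
have w_ge0 : 0 <= z - 1 by lra.
have := card_draws_cardI_leq T_gt0 K b w_ge0 leq_nT.
rewrite -/p addrC subrK => tail.
set k := #|K| in large_K tail.
have le_bk : (b <= k)%N.
  rewrite -(ler_nat R); have := ler_wpM2r (ler0n R k) p_le1; have := ler0n R b.
  lra.
have mgf : (1 + (z - 1) * (1 - p)) ^+ k <= z ^+ k * expR (k%:R * - (p / 3)).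
  have base : 1 + (z - 1) * (1 - p) <= z * (1 - p / 3) by nra.
  apply: le_trans (_ : _ <= (z * (1 - p / 3)) ^+ k) _.
    by rewrite lerXn2r // nnegrE; nra.
  rewrite exprMn; apply: ler_wpM2l; first exact: exprn_ge0 (ltW z_gt0).
  by apply: expr1D_le_expR; lra.
rewrite -(ler_pM2r (exprn_gt0 (k - b) z_gt0)); apply: le_trans tail _.
rewrite -mulrA ler_wpM2l // (le_trans mgf) //.
rewrite -[in z ^+ k](subnK le_bk) exprD -mulrA mulrC.
apply: ler_wpM2r; first exact: exprn_ge0 (ltW z_gt0).
by rewrite /z -expRM_natl -expRD ler_expR; nra.
Qed.

End Chernoff.

Section Chains.
Variables (R : realType) (T I : finType) (F : I -> {set T}).
Hypothesis F_chain : forall j k, (F j \subset F k) || (F k \subset F j).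

Lemma chain_subset_card j k : (#|F j| <= #|F k|)%N -> F j \subset F k.
Proof.
case/orP: (F_chain j k) => // sFkj le_jk.
by rewrite -(subset_leqif_card sFkj).2 eqn_leq le_jk subset_leq_card.
Qed.

Definition dense_draws n (c : R) a := [set S : {set T} | (#|S| == n) &&
  [exists j, (#|F j|%:R <= c) && (a <= #|S :&: F j|)%N]].

Definition sparse_draws n (c : R) b := [set S : {set T} | (#|S| == n) &&
  [exists j, (c <= #|F j|%:R) && (#|S :&: F j| <= b)%N]].

Hypothesis T_gt0 : (0 < #|T|)%N.
Variable n : nat.
Hypothesis leq_nT : (n <= #|T|)%N.
Let p : R := n%:R / #|T|%:R.

Lemma card_dense_draws (c : R) a : p * c <= a%:R / 2 ->
  (#|dense_draws n c a|%:R : R) <= 'C(#|T|, n)%:R * expR (- (a%:R / 6)).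
Proof.
move=> small_c.
have [j1 small_j1|no_small] := pickP (fun j => #|F j|%:R <= c); last first.
  suff -> : dense_draws n c a = set0 by rewrite cards0 mulr_ge0 ?expR_ge0.
  apply/setP => S; rewrite !inE; apply/negP => /andP[_ /existsP[j]].
  by rewrite no_small.
have [j0 small_j0 max_j0] :=
  @arg_maxnP _ j1 (fun j => #|F j|%:R <= c) (fun j => #|F j|) small_j1.
apply: le_trans (hypergeometric_lower_tail T_gt0 leq_nT (K := F j0) _); last first.
  by rewrite (le_trans _ small_c) // ler_wpM2l ?divr_ge0.
rewrite ler_nat subset_leq_card //; apply/subsetP => S; rewrite !inE.
move=> /andP[-> /existsP[j /andP[small_j dense_j]]] /=.
apply: leq_trans dense_j _; apply/subset_leq_card/setIS/chain_subset_card.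
exact: max_j0.
Qed.

Lemma card_sparse_draws (c : R) b : 2 * b%:R <= p * c ->
  (#|sparse_draws n c b|%:R : R) <= 'C(#|T|, n)%:R * expR (- (b%:R / 6)).
Proof.
move=> large_c.
have [j1 large_j1|no_large] := pickP (fun j => c <= #|F j|%:R); last first.
  suff -> : sparse_draws n c b = set0 by rewrite cards0 mulr_ge0 ?expR_ge0.
  apply/setP => S; rewrite !inE; apply/negP => /andP[_ /existsP[j]].
  by rewrite no_large.
have [j0 large_j0 min_j0] :=
  @arg_minnP _ j1 (fun j => c <= #|F j|%:R) (fun j => #|F j|) large_j1.
apply: le_trans (hypergeometric_upper_tail T_gt0 leq_nT (K := F j0) _); last first.
  by rewrite (le_trans large_c) // ler_wpM2l ?divr_ge0.
rewrite ler_nat subset_leq_card //; apply/subsetP => S; rewrite !inE.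
move=> /andP[-> /existsP[j /andP[large_j sparse_j]]] /=.
apply: leq_trans sparse_j; apply/subset_leq_card/setIS/chain_subset_card.
exact: min_j0.
Qed.

End Chains.

Lemma leq_card_bigcup (I T : finType) (A : I -> {set T}) :
  (#|\bigcup_i A i| <= \sum_i #|A i|)%N.
Proof.
apply: (big_ind2 (fun (B : {set T}) k => #|B| <= k)%N); first by rewrite cards0.
  by move=> B1 k1 B2 k2 le1 le2; rewrite cardsU (leq_trans (leq_subr _ _)) ?leq_add.
by [].
Qed.

Section Segments.
Variables (R : realType) (T : finType) (x : T -> R).

Definition seg (a b : R) : {set T} := [set l | a <= x l <= b].

Definition seg_from (i j : T) : {set T} := seg (x i) (x j).

Lemma seg_from_chain i j k :
  (seg_from i j \subset seg_from i k) || (seg_from i k \subset seg_from i j).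
Proof.
have sub j' k' : x j' <= x k' -> seg_from i j' \subset seg_from i k'.
  by move=> le_jk; apply/subsetP => l; rewrite !inE => /andP[-> /le_trans->].
by case: (leP (x j) (x k)) => [/sub-> | /ltW/sub->]; rewrite ?orbT.
Qed.

Lemma seg_endpoints a b : seg a b != set0 -> exists i j, seg a b = seg_from i j.
Proof.
case/set0Pn => l0 l0_in.
have [i i_in min_i] := arg_minP (P := [in seg a b]) x l0_in.
have [j j_in max_j] := arg_maxP (P := [in seg a b]) x l0_in.
exists i, j; apply/setP => l; rewrite [in RHS]inE.
apply/idP/andP => [l_in | [le_il le_lj]].
  split; [exact: min_i | exact: max_j].
move: i_in j_in; rewrite !inE => /andP[le_ai _] /andP[_ le_jb].
by rewrite (le_trans le_ai le_il) (le_trans le_lj le_jb).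
Qed.

End Segments.

Lemma cnt_inE (R : realType) d (x : 'I_d -> R) A J :
  cnt_in x A J = #|A :&: seg x J.1 J.2|.
Proof. by rewrite /cnt_in setIdE. Qed.

Section BadDraws.
Variables (R : realType) (T : finType) (x : T -> R) (n : nat) (c1 c2 : R) (a b : nat).

Definition bad_draws : {set {set T}} :=
  \bigcup_(i : T)
    (dense_draws (seg_from x i) n c1 a :|: sparse_draws (seg_from x i) n c2 b).

Lemma notin_bad_draws (S : {set T}) u v : #|S| = n -> S \notin bad_draws ->
  (0 < a)%N -> (a <= #|S :&: seg x u v| <= b)%N -> c1 < #|seg x u v|%:R < c2.
Proof.
move=> card_S S_good a_gt0 /andP[le_a le_b].
have /seg_endpoints[i [j seg_ij]] : seg x u v != set0.
  by rewrite -card_gt0 (leq_trans a_gt0) ?(leq_trans le_a) ?subset_leq_card ?subsetIr.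
have : S \notin dense_draws (seg_from x i) n c1 a :|: sparse_draws (seg_from x i) n c2 b.
  by apply: contra S_good => S_bad; apply/bigcupP; exists i.
rewrite !inE card_S eqxx /= negb_or => /andP[/existsPn/(_ j) + /existsPn/(_ j)].
by rewrite -seg_ij le_a le_b !andbT -!ltNge => -> ->.
Qed.

Hypotheses (T_gt0 : (0 < #|T|)%N) (leq_nT : (n <= #|T|)%N).
Let p : R := n%:R / #|T|%:R.

Lemma card_bad_draws : p * c1 <= a%:R / 2 -> 2 * b%:R <= p * c2 -> (a <= b)%N ->
  (#|bad_draws|%:R : R) <= #|T|%:R * (2 * ('C(#|T|, n)%:R * expR (- (a%:R / 6)))).
Proof.
move=> small_c1 large_c2 le_ab.
apply: le_trans (_ : _ <= \sum_(i : T) (#|dense_draws (seg_from x i) n c1 a|%:R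
    + #|sparse_draws (seg_from x i) n c2 b|%:R)) _.
  under eq_bigr do rewrite -natrD.
  rewrite -natr_sum ler_nat (leq_trans (leq_card_bigcup _)) // leq_sum // => i _.
  by rewrite cardsU leq_subr.
rewrite mulr_natl -sumr_const; apply: ler_sum => i _.
rewrite mulr2n mulrDl mul1r; apply: lerD.
  exact: (card_dense_draws (F := seg_from x i)
            (seg_from_chain x i) T_gt0 leq_nT small_c1).
apply: le_trans
  (card_sparse_draws (F := seg_from x i) (seg_from_chain x i) T_gt0 leq_nT large_c2) _.
by apply: ler_wpM2l => //; rewrite ler_expR lerN2 ler_pM2r ?invr_gt0 ?ltr0n // ler_nat.
Qed.

End BadDraws.

Section ProcessProbability.
Variables (R : realType) (d n : nat) (Omega : finType).
Variables (q : {set 'I_d} -> Omega -> R) (I : {set 'I_d} -> Omega -> R * R).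
Variable E : {set 'I_d} -> R * R -> bool.
Hypothesis q_ge0 : forall (S : {set 'I_d}) w, #|S| = n -> 0 <= q S w.

Let prob_E (S : {set 'I_d}) : R := \sum_(w : Omega) q S w * (if E S (I S w) then 1 else 0).

Let prob_E_ge0 (S : {set 'I_d}) : #|S| = n -> 0 <= prob_E S.
Proof. by move=> card_S; apply: sumr_ge0 => w _; rewrite mulr_ge0 ?q_ge0 //; case: ifP. Qed.

Lemma proc_prob_ge0 : 0 <= proc_prob n q I E.
Proof.
by apply: sumr_ge0 => S /eqP card_S; rewrite mulr_ge0 ?invr_ge0 ?ler0n ?prob_E_ge0.
Qed.

Hypothesis q_sum1 : forall S : {set 'I_d}, #|S| = n -> \sum_(w : Omega) q S w = 1.

Lemma proc_prob_ge_compl (B : {set {set 'I_d}}) : (n <= d)%N ->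
  (forall (S : {set 'I_d}) w, #|S| = n -> 0 < q S w -> S \notin B -> E S (I S w)) ->
  1 - #|B|%:R / 'C(d, n)%:R <= proc_prob n q I E.
Proof.
move=> le_nd good_E; set C : R := 'C(d, n)%:R.
have C_gt0 : 0 < C by rewrite ltr0n bin_gt0.
have prob_E_good (S : {set 'I_d}) : #|S| = n -> S \notin B -> prob_E S = 1.
  move=> card_S S_good; rewrite -(q_sum1 card_S); apply: eq_bigr => w _.
  have [->|q_neq0] := eqVneq (q S w) 0; first by rewrite mul0r.
  by rewrite good_E ?mulr1 // lt_def q_neq0 q_ge0.
set D := [set S : {set 'I_d} | #|S| == n].
rewrite /proc_prob (eq_bigl [in D]) => [|S]; last by rewrite inE.
apply: le_trans (_ : _ <= \sum_(S in D) C^-1 * (1 - (S \in B)%:R)) _; last first.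
  apply: ler_sum => S; rewrite inE => /eqP card_S; rewrite ler_pM2l ?invr_gt0 //.
  rewrite -/(prob_E S); have [S_bad|S_good] := boolP (S \in B) => /=.
    by rewrite subrr prob_E_ge0.
  by rewrite subr0 prob_E_good.
rewrite -mulr_sumr sumrB sumr_const card_draws card_ord -/C mulrBr mulVf ?gt_eqF //.
rewrite lerD2l lerN2 mulrC ler_pM2r ?invr_gt0 // -sum1_card natr_sum.
rewrite [X in X <= _]big_mkcond [X in _ <= X]big_mkcond /=; apply: ler_sum => S _.
by case: (S \in D); case: (S \in B).
Qed.

End ProcessProbability.

Lemma proc_prob_cnt_in_range (R : realType) (d n : nat) (x : 'I_d -> R) (a b : nat)
  (Omega : finType) (q : {set 'I_d} -> Omega -> R)
  (I : {set 'I_d} -> Omega -> R * R) :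
  (0 < a)%N -> (a <= b)%N -> (0 < n)%N -> (n <= d)%N ->
  (forall (S : {set 'I_d}) w, #|S| = n -> 0 <= q S w) ->
  (forall S : {set 'I_d}, #|S| = n -> \sum_(w : Omega) q S w = 1) ->
  (forall (S : {set 'I_d}) w, #|S| = n -> 0 < q S w ->
     (a <= cnt_in x S (I S w) <= b)%N) ->
  1 - 2 * d%:R * expR (- (a%:R / 6)) <= proc_prob n q I (fun _ J =>
      ((1 / 2 : R) * a%:R * d%:R / n%:R < (cnt_in x setT J)%:R)
      && ((cnt_in x setT J)%:R < (2 : R) * b%:R * d%:R / n%:R)).
Proof.
move=> a_gt0 le_ab n_gt0 le_nd q_ge0 q_sum1 cnt_SI.
have T_gt0 : (0 < #|'I_d|)%N by rewrite card_ord (leq_trans n_gt0).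
have leq_nT : (n <= #|'I_d|)%N by rewrite card_ord.
have nd_neq0 : (n%:R != 0 :> R) && (d%:R != 0 :> R).
  by rewrite !pnatr_eq0 -!lt0n n_gt0 (leq_trans n_gt0).
have small_c1 : n%:R / #|'I_d|%:R * (1 / 2 * a%:R * d%:R / n%:R) <= a%:R / 2 :> R.
  by rewrite card_ord [X in X <= _](_ : _ = a%:R / 2) //; field.
have large_c2 : 2 * b%:R <= n%:R / #|'I_d|%:R * (2 * b%:R * d%:R / n%:R) :> R.
  by rewrite card_ord [X in _ <= X](_ : _ = 2 * b%:R) //; field.
have := card_bad_draws x T_gt0 leq_nT small_c1 large_c2 le_ab.
rewrite card_ord => card_bad.
apply: le_trans (proc_prob_ge_compl q_ge0 q_sum1 le_nd _).
  set C : R := 'C(d, n)%:R; have C_gt0 : 0 < C by rewrite ltr0n bin_gt0.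
  rewrite lerD2l lerN2 ler_pdivrMr //; apply: le_trans card_bad _.
  by rewrite [X in X <= _](_ : _ = 2 * d%:R * expR (- (a%:R / 6)) * C) //; ring.
move=> S w card_S q_gt0 S_good; have := cnt_SI S w card_S q_gt0.
rewrite !cnt_inE setTI; exact: notin_bad_draws card_S S_good a_gt0.
Qed.

Theorem lemmaF4 (R : realType) (d n : nat) (x : 'I_d -> R) (L Rb : int)
  (Omega : finType) (q : {set 'I_d} -> Omega -> R)
  (I : {set 'I_d} -> Omega -> R * R) :
  injective x ->
  (L <= Rb)%R ->
  (0 < n)%N -> (n <= d)%N ->
  (forall (S : {set 'I_d}) w, #|S| = n -> 0 <= q S w) ->
  (forall S : {set 'I_d}, #|S| = n -> \sum_(w : Omega) q S w = 1) ->
  (forall (S : {set 'I_d}) w, #|S| = n -> 0 < q S w ->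
     (L <= (cnt_in x S (I S w))%:Z <= Rb)%R) ->
  proc_prob n q I (fun _ J =>
      ((1 / 2 : R) * L%:~R * d%:R / n%:R < (cnt_in x setT J)%:R)
      && ((cnt_in x setT J)%:R < (2 : R) * Rb%:~R * d%:R / n%:R))
  >= 1 - 3 * d%:R * expR (- (L%:~R / 6)).
Proof.
move=> _ le_LR n_gt0 le_nd q_ge0 q_sum1 cnt_SI.
have [L_le0|] := lerP L 0.
  apply: le_trans _ (proc_prob_ge0 I _ q_ge0); rewrite subr_le0.
  have L_le0' : (L%:~R : R) <= 0 by rewrite lerz0.
  have e_ge1 : 1 <= expR (- (L%:~R / 6) : R) by apply: le_trans (expR_ge1Dx _); lra.
  have d_ge1 : 1 <= d%:R :> R by rewrite ler1n (leq_trans n_gt0).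
  nra.
case: L => // a in le_LR cnt_SI *; case: Rb => // b in le_LR cnt_SI *.
rewrite lez_nat in le_LR; rewrite ltz_nat -!pmulrn => a_gt0.
apply: le_trans _ (proc_prob_cnt_in_range a_gt0 le_LR n_gt0 le_nd q_ge0 q_sum1 _).
  have := mulr_ge0 (ler0n R d) (expR_ge0 (- (a%:R / 6))); lra.
by move=> S w card_S q_gt0; rewrite -!lez_nat; apply: cnt_SI.
Qed.
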